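(* Let \(1 \le \ell < n\) be positive integers. Then \[ {}_2F_2\left(\begin{matrix} \frac{n-1}{n}\ell + 1, & 1 \\ \ell+2, & \frac{n-1}{n}\ell+3 \end{matrix}\,;\, \frac{\ell}{n}\right) = (\ell+1)!\,\frac{n^{\ell+1}}{\ell^{\ell+1}}\,\frac{\Gamma\!\left(\frac{n-1}{n}\ell+3\right)}{\Gamma\!\left(\frac{n-1}{n}\ell+1\right)}\left[\frac{n}{\ell}\left(\sum_{k=0}^{\ell}\frac{\ell^k}{k!\,n^k} - e^{\ell/n}\right) + \frac{\ell^{\ell-1}}{(\ell-1)!\,n^{\ell-1}}\cdot\frac{1}{(n+1)(\ell+1)-1-2\ell}\right]. \]
   Context: \({}_pF_q\) denotes the generalized hypergeometric series and \(\Gamma\) the Gamma function. This special value is used to evaluate, via Waadeland's tail theorem, the continued fraction whose partial numerators are \(-z(m+nz)\) and partial denominators \(m+(n+1)z+2\), at \(z=\ell/n\). *)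

From Stdlib Require Import Reals Factorial.
From Coquelicot Require Import Coquelicot.
Open Scope R_scope.

Fixpoint poch (a : R) (k : nat) : R :=
  match k with
  | O => 1
  | S k' => poch a k' * (a + INR k')
  end.

Definition hyp2F2 (a1 a2 b1 b2 z : R) : R :=
  Series (fun k => poch a1 k * poch a2 k / (poch b1 k * poch b2 k)
                   * z ^ k / INR (fact k)).

Definition Gamma (x : R) : R :=
  RInt_gen (fun t => Rpower t (x - 1) * exp (- t))
           (at_right 0) (Rbar_locally p_infty).

From Stdlib Require Import Reals Factorial Lra Lia.
From Coquelicot Require Import Coquelicot.
Open Scope R_scope.

(* With z = ℓ/n we have a = (n-1)ℓ/n = ℓ - z, and once the Pochhammer symbols cancel, the k-th
   term of the 2F2 series is (a+1)(a+2)(ℓ+1)!/z^(ℓ+1) times z^m/(m!(m-z)(m+1-z)), m = ℓ+1+k.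
   With u_m = z^m/(m!(m+1-z)) this term is u_(m-1) - u_m - z^(m-1)/m!, so the series is a
   telescoping series minus a tail of the exponential series; u_ℓ is the last summand of the
   bracket. The Gamma quotient is (a+1)(a+2) by Γ(x+1) = xΓ(x), obtained by integrating Euler's
   integral by parts; the integral converges because t^c e^(-t) is bounded near 0 and O(1/t^2)
   at infinity. *)

Lemma pos_of_Rmin_le a b x : 0 < a -> 0 < b -> Rmin a b <= x -> 0 < x.
Proof. intros Ha Hb H. eapply Rlt_le_trans; [|exact H]. now apply Rmin_glb_lt. Qed.

Lemma at_right_0_lt d : 0 < d -> at_right 0 (fun x => 0 < x < d).
Proof.
  intros Hd. exists (mkposreal d Hd). intros y Hy Hy0. split; [exact Hy0|].
  change (Rabs (y - 0) < d) in Hy. rewrite Rminus_0_r, Rabs_right in Hy; lra.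
Qed.

Lemma half_line_eventually d m : 0 < d ->
  filter_prod (at_right 0) (Rbar_locally p_infty) (fun ab => 0 < fst ab < d /\ m < snd ab).
Proof.
  intros Hd. apply Filter_prod with (fun x => 0 < x < d) (fun y => m < y).
  - now apply at_right_0_lt.
  - now exists m.
  - now intros.
Qed.

Lemma RInt_inv_sqr B a b : 0 < a -> 0 < b -> RInt (fun t => B / (t * t)) a b = B / a - B / b.
Proof.
  intros Ha Hb. apply is_RInt_unique.
  replace (B / a - B / b) with (minus ((fun t => - B / t) b) ((fun t => - B / t) a))
    by (unfold minus, plus, opp; simpl; field; lra).
  apply (is_RInt_derive (V := R_CompleteNormedModule)); intros x [Hx _];
    pose proof (pos_of_Rmin_le a b x Ha Hb Hx).
  - auto_derive; [lra | field; lra].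
  - apply (ex_derive_continuous (K := R_AbsRing) (V := R_NormedModule)).
    auto_derive. nra.
Qed.

Section HalfLine.

Variables (f : R -> R) (M B : R).
Hypothesis f_cont : forall t, 0 < t -> continuous f t.
Hypothesis f_ge0 : forall t, 0 < t -> 0 <= f t.
Hypothesis f_le_near0 : forall t, 0 < t <= 1 -> f t <= M.
Hypothesis f_le_tail : forall t, 1 <= t -> f t <= B / (t * t).

Lemma ex_RInt_half_line a b : 0 < a -> 0 < b -> ex_RInt f a b.
Proof.
  intros Ha Hb. apply (ex_RInt_continuous (V := R_CompleteNormedModule)).
  intros z [Hz _]. apply f_cont. exact (pos_of_Rmin_le a b z Ha Hb Hz).
Qed.

Lemma RInt_Chasles_half_line a b c : 0 < a -> 0 < b -> 0 < c ->
  RInt f a b + RInt f b c = RInt f a c.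
Proof. intros. apply (RInt_Chasles f a b c); now apply ex_RInt_half_line. Qed.

Lemma RInt_ge0_half_line a b : 0 < a <= b -> 0 <= RInt f a b.
Proof.
  intros Hab. apply RInt_ge_0; [lra | apply ex_RInt_half_line; lra |].
  intros x Hx. apply f_ge0. lra.
Qed.

Lemma RInt_near0_bounds a b : 0 < a <= b -> b <= 1 -> 0 <= RInt f a b <= M * (b - a).
Proof.
  intros Hab Hb. split; [now apply RInt_ge0_half_line|].
  eapply Rle_trans; [apply Rle_abs|]. rewrite Rmult_comm.
  apply abs_RInt_le_const; [lra | apply ex_RInt_half_line; lra |].
  intros t Ht. rewrite Rabs_right by (apply Rle_ge, f_ge0; lra). apply f_le_near0. lra.
Qed.

Lemma tail_bound_ge0 : 0 <= B.
Proof.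
  replace B with (B / (1 * 1)) by field.
  apply Rle_trans with (f 1); [apply f_ge0 | apply f_le_tail]; lra.
Qed.

Lemma near0_bound_ge0 : 0 <= M.
Proof. apply Rle_trans with (f 1); [apply f_ge0 | apply f_le_near0]; lra. Qed.

Lemma RInt_tail_bounds a b : 1 <= a <= b -> 0 <= RInt f a b <= B / a.
Proof.
  intros Hab. split; [apply RInt_ge0_half_line; lra|].
  assert (HBb : 0 <= B / b) by (apply Rdiv_le_0_compat; [apply tail_bound_ge0 | lra]).
  rewrite <- (Rminus_0_r (B / a)). apply Rle_trans with (B / a - B / b); [|lra].
  rewrite <- RInt_inv_sqr by lra.
  apply RInt_le; [lra | apply ex_RInt_half_line; lra | |].
  - apply (ex_RInt_continuous (V := R_CompleteNormedModule)). intros z [Hz _].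
    assert (0 < z) by (apply (pos_of_Rmin_le a b); lra).
    apply (ex_derive_continuous (K := R_AbsRing) (V := R_NormedModule)).
    auto_derive. nra.
  - intros t Ht. apply f_le_tail. lra.
Qed.

Lemma RInt_half_line_cauchy d m u1 u2 v1 v2 : 0 < d <= 1 -> 1 <= m ->
  0 < u1 < d -> 0 < v1 < d -> m < u2 -> m < v2 ->
  Rabs (RInt f v1 v2 - RInt f u1 u2) <= M * d + B / m.
Proof.
  intros Hd Hm Hu1 Hv1 Hu2 Hv2.
  assert (Split : forall a b, 0 < a < d -> m < b ->
    RInt f a b = RInt f a d + RInt f d m + RInt f m b).
  { intros a b Ha Hb. rewrite !RInt_Chasles_half_line; lra. }
  rewrite (Split v1 v2), (Split u1 u2) by lra.
  pose proof (RInt_near0_bounds u1 d ltac:(lra) ltac:(lra)).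
  pose proof (RInt_near0_bounds v1 d ltac:(lra) ltac:(lra)).
  pose proof (RInt_tail_bounds m u2 ltac:(lra)).
  pose proof (RInt_tail_bounds m v2 ltac:(lra)).
  pose proof near0_bound_ge0.
  assert (M * (d - u1) <= M * d) by (apply Rmult_le_compat_l; lra).
  assert (M * (d - v1) <= M * d) by (apply Rmult_le_compat_l; lra).
  apply Rabs_le. lra.
Qed.

Lemma ex_RInt_gen_half_line : ex_RInt_gen f (at_right 0) (Rbar_locally p_infty).
Proof.
  apply (filterlimi_locally_cauchy (U := R_CompleteSpace)
           (F := filter_prod (at_right 0) (Rbar_locally p_infty))
           (fun ab y => is_RInt f (fst ab) (snd ab) y)).
  - apply filter_imp with (2 := half_line_eventually 1 1 Rlt_0_1).
    intros [x y] [Hx Hy]; simpl in *. split.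
    + exists (RInt f x y).
      apply (RInt_correct (V := R_CompleteNormedModule)), ex_RInt_half_line; lra.
    + intros y1 y2 H1 H2.
      now rewrite <- (is_RInt_unique _ _ _ _ H1), <- (is_RInt_unique _ _ _ _ H2).
  - intros eps. pose proof (cond_pos eps) as Heps.
    pose proof near0_bound_ge0 as HM. pose proof tail_bound_ge0 as HB.
    set (d := Rmin 1 (eps / (4 * (M + 1)))).
    set (m := Rmax 1 (4 * (B + 1) / eps)).
    assert (Hd : 0 < d <= 1)
      by (split; [apply Rmin_glb_lt; [lra | apply Rdiv_lt_0_compat; lra] | apply Rmin_l]).
    assert (Hm : 1 <= m) by apply Rmax_l.
    assert (HMd : M * d <= eps / 4).
    { apply Rle_trans with ((M + 1) * (eps / (4 * (M + 1)))); [|right; field; lra].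
      apply Rmult_le_compat; [lra | lra | lra | apply Rmin_r]. }
    assert (HBm : B / m < eps / 4).
    { assert (4 * (B + 1) <= eps * m).
      { replace (4 * (B + 1)) with (eps * (4 * (B + 1) / eps)) by (field; lra).
        apply Rmult_le_compat_l; [lra | apply Rmax_r]. }
      apply (Rmult_lt_reg_r m); [lra|]. replace (B / m * m) with B by (field; lra). lra. }
    exists (fun ab => 0 < fst ab < d /\ m < snd ab). split; [apply half_line_eventually; lra|].
    intros [u1 u2] [v1 v2] [Hu1 Hu2] [Hv1 Hv2] u' v' Hu Hv; simpl in *.
    apply (is_RInt_unique (V := R_CompleteNormedModule)) in Hu, Hv. subst u' v'.
    change (Rabs (RInt f v1 v2 - RInt f u1 u2) < eps).
    apply Rle_lt_trans with (M * d + B / m); [now apply RInt_half_line_cauchy | lra].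
Qed.

End HalfLine.

Lemma is_RInt_gen_half_line_gt0 f v :
  (forall t, 0 < t -> continuous f t) -> (forall t, 0 < t -> 0 < f t) ->
  is_RInt_gen f (at_right 0) (Rbar_locally p_infty) v -> 0 < v.
Proof.
  intros f_cont f_gt0 Hv.
  assert (f_ge0 : forall t, 0 < t -> 0 <= f t) by (intros t Ht; left; now apply f_gt0).
  set (c := RInt f 1 2).
  assert (Hc : 0 < c / 2).
  { enough (0 < c) by lra.
    apply RInt_gt_0; [lra | intros; apply f_gt0; lra | intros; apply f_cont; lra]. }
  pose proof (Hv _ (locally_ball v (mkposreal _ Hc))) as Hnear. unfold filtermapi in Hnear.
  destruct (filter_ex _ (filter_and _ _ Hnear (half_line_eventually 1 2 Rlt_0_1)))
    as [[x1 x2] [[y [Hy Hball]] [Hx1 Hx2]]]; simpl in *.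
  apply (is_RInt_unique (V := R_CompleteNormedModule)) in Hy. subst y.
  change (Rabs (RInt f x1 x2 - v) < c / 2) in Hball.
  rewrite <- (RInt_Chasles_half_line f f_cont x1 1 x2),
    <- (RInt_Chasles_half_line f f_cont 1 2 x2) in Hball by lra.
  pose proof (RInt_ge0_half_line f f_cont f_ge0 x1 1 ltac:(lra)).
  pose proof (RInt_ge0_half_line f f_cont f_ge0 2 x2 ltac:(lra)).
  apply Rabs_def2 in Hball. fold c in Hball. lra.
Qed.

Lemma pow_le_fact_mul_exp x k : 0 <= x -> x ^ k <= INR (fact k) * exp x.
Proof.
  intros Hx. pose proof (INR_fact_lt_0 k) as Hf.
  assert (Hterm : x ^ k / INR (fact k) <= exp x).
  { eapply Rle_trans; [|apply (exp_ge_taylor x k Hx)].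
    destruct k as [|k]; [simpl; lra|]. rewrite tech5.
    enough (0 <= sum_f_R0 (fun j => x ^ j / INR (fact j)) k) by lra.
    apply cond_pos_sum. intros j.
    apply Rle_mult_inv_pos; [now apply pow_le | apply INR_fact_lt_0]. }
  apply (Rmult_le_compat_l (INR (fact k))) in Hterm; [|lra].
  now replace (INR (fact k) * (x ^ k / INR (fact k))) with (x ^ k) in Hterm by (field; lra).
Qed.

Lemma Rpower_le_1 t c : 0 < t <= 1 -> 0 <= c -> Rpower t c <= 1.
Proof.
  intros Ht Hc. apply Rle_trans with (Rpower 1 c); [now apply Rle_Rpower_l|].
  unfold Rpower. rewrite ln_1, Rmult_0_r, exp_0. lra.
Qed.

Definition Gamma_integrand (c t : R) : R := Rpower t c * exp (- t).

Lemma Gamma_integrand_gt0 c t : 0 < Gamma_integrand c t.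
Proof. apply Rmult_lt_0_compat; apply exp_pos. Qed.

Lemma Gamma_integrand_succ c t : 0 < t -> Gamma_integrand (c + 1) t = t * Gamma_integrand c t.
Proof. intros Ht. unfold Gamma_integrand. rewrite Rpower_plus, Rpower_1 by exact Ht. ring. Qed.

Lemma is_derive_Gamma_integrand c t : 0 < t ->
  is_derive (Gamma_integrand (c + 1)) t ((c + 1) * Gamma_integrand c t - Gamma_integrand (c + 1) t).
Proof.
  intros Ht. unfold Gamma_integrand.
  replace ((c + 1) * (Rpower t c * exp (- t)) - Rpower t (c + 1) * exp (- t))
    with ((c + 1) * Rpower t (c + 1 - 1) * exp (- t) + Rpower t (c + 1) * (- exp (- t)))
    by (replace (c + 1 - 1) with c by ring; ring).
  apply (is_derive_mult (fun t => Rpower t (c + 1)) (fun t => exp (- t))).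
  - now apply is_derive_Reals, derivable_pt_lim_power.
  - auto_derive; [easy | ring].
  - intros; apply Rmult_comm.
Qed.

Lemma continuous_Gamma_integrand c t : 0 < t -> continuous (Gamma_integrand c) t.
Proof.
  intros Ht. replace c with (c - 1 + 1) by ring.
  apply (ex_derive_continuous (K := R_AbsRing) (V := R_NormedModule)).
  eexists. now apply is_derive_Gamma_integrand.
Qed.

Lemma Gamma_integrand_le_1 c t : 0 <= c -> 0 < t <= 1 -> Gamma_integrand c t <= 1.
Proof.
  intros Hc Ht. unfold Gamma_integrand. rewrite <- (Rmult_1_l 1).
  apply Rmult_le_compat; [left; apply exp_pos | left; apply exp_pos | now apply Rpower_le_1 |].
  rewrite <- exp_0. left. apply exp_increasing. lra.
Qed.

Lemma Gamma_integrand_le_inv_sqr c :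
  exists B, 0 < B /\ forall t, 1 <= t -> Gamma_integrand c t <= B / (t * t).
Proof.
  destruct (INR_archimed 1 c) as [k Hk]; [lra|]. rewrite Rmult_1_r in Hk.
  exists (INR (fact (k + 2))). split; [apply INR_fact_lt_0|]. intros t Ht.
  assert (Hpow : Rpower t c <= t ^ k)
    by (rewrite <- Rpower_pow by lra; apply Rle_Rpower; lra).
  assert (Hexp : t ^ k * (t * t) <= INR (fact (k + 2)) * exp t).
  { replace (t ^ k * (t * t)) with (t ^ (k + 2)) by (rewrite pow_add; ring).
    apply pow_le_fact_mul_exp. lra. }
  pose proof (exp_pos t).
  unfold Gamma_integrand. rewrite exp_Ropp.
  apply Rle_trans with (t ^ k * / exp t).
  { apply Rmult_le_compat_r; [left; now apply Rinv_0_lt_compat | exact Hpow]. }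
  replace (t ^ k * / exp t) with (t ^ k * (t * t) / (exp t * (t * t))) by (field; lra).
  replace (INR (fact (k + 2)) / (t * t))
    with (INR (fact (k + 2)) * exp t / (exp t * (t * t))) by (field; lra).
  apply Rmult_le_compat_r; [left; apply Rinv_0_lt_compat, Rmult_lt_0_compat; nra | exact Hexp].
Qed.

Lemma Gamma_integrand_lim_0 c : 0 <= c ->
  filterlim (Gamma_integrand (c + 1)) (at_right 0) (locally 0).
Proof.
  intros Hc. apply filterlim_locally. intros eps. pose proof (cond_pos eps).
  apply filter_imp with (fun t => 0 < t < Rmin 1 eps);
    [|apply at_right_0_lt, Rmin_glb_lt; lra].
  intros t Ht. pose proof (Rmin_l 1 eps). pose proof (Rmin_r 1 eps).
  change (Rabs (Gamma_integrand (c + 1) t - 0) < eps).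
  rewrite Rminus_0_r, Gamma_integrand_succ by lra.
  pose proof (Gamma_integrand_le_1 c t Hc ltac:(lra)). pose proof (Gamma_integrand_gt0 c t).
  rewrite Rabs_right by nra. nra.
Qed.

Lemma Gamma_integrand_lim_infty c :
  filterlim (Gamma_integrand c) (Rbar_locally p_infty) (locally 0).
Proof.
  destruct (Gamma_integrand_le_inv_sqr c) as [B [HB Htail]].
  apply filterlim_locally. intros eps. pose proof (cond_pos eps).
  exists (Rmax 1 (B / eps)). intros t Ht.
  assert (Ht1 : 1 < t) by (eapply Rle_lt_trans; [apply Rmax_l | exact Ht]).
  assert (HBt : B < eps * t).
  { replace B with (eps * (B / eps)) by (field; lra).
    apply Rmult_lt_compat_l; [lra|]. eapply Rle_lt_trans; [apply Rmax_r | exact Ht]. }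
  change (Rabs (Gamma_integrand c t - 0) < eps).
  rewrite Rminus_0_r, Rabs_right by (left; apply Gamma_integrand_gt0).
  eapply Rle_lt_trans; [apply Htail; lra|].
  apply (Rmult_lt_reg_r (t * t)); [nra|].
  replace (B / (t * t) * (t * t)) with B by (field; lra). nra.
Qed.

Lemma is_RInt_gen_Derive_Gamma_integrand c : 0 <= c ->
  is_RInt_gen (Derive (Gamma_integrand (c + 1))) (at_right 0) (Rbar_locally p_infty) 0.
Proof.
  intros Hc.
  enough (H : is_RInt_gen (Derive (Gamma_integrand (c + 1)))
                (at_right 0) (Rbar_locally p_infty) (0 - 0)) by now rewrite Rminus_0_r in H.
  apply is_RInt_gen_Derive.
  - apply filter_imp with (2 := half_line_eventually 1 1 Rlt_0_1).
    intros [x y] [Hx Hy] t [Ht _]; simpl in *.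
    eexists. apply is_derive_Gamma_integrand, (pos_of_Rmin_le x y); lra.
  - apply filter_imp with (2 := half_line_eventually 1 1 Rlt_0_1).
    intros [x y] [Hx Hy] t [Ht _]; simpl in *.
    assert (Ht0 : 0 < t) by (apply (pos_of_Rmin_le x y); lra).
    apply continuous_ext_loc
      with (fun s => (c + 1) * Gamma_integrand c s - Gamma_integrand (c + 1) s).
    + apply filter_imp with (fun s => 0 < s); [|now apply (open_gt 0)].
      intros s Hs. symmetry. now apply is_derive_unique, is_derive_Gamma_integrand.
    + apply (continuous_minus (fun s => (c + 1) * Gamma_integrand c s)).
      * apply (continuous_scal_r (c + 1) (Gamma_integrand c)), continuous_Gamma_integrand, Ht0.
      * now apply continuous_Gamma_integrand.
  - now apply Gamma_integrand_lim_0.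
  - apply Gamma_integrand_lim_infty.
Qed.

Lemma is_RInt_gen_Gamma_integrand_succ c v : 0 <= c ->
  is_RInt_gen (Gamma_integrand c) (at_right 0) (Rbar_locally p_infty) v ->
  is_RInt_gen (Gamma_integrand (c + 1)) (at_right 0) (Rbar_locally p_infty) ((c + 1) * v).
Proof.
  intros Hc Hv.
  replace ((c + 1) * v) with (minus (scal (c + 1) v) 0)
    by (unfold minus, plus, opp, scal; simpl; unfold mult; simpl; ring).
  apply is_RInt_gen_ext with
    (fun t => minus (scal (c + 1) (Gamma_integrand c t)) (Derive (Gamma_integrand (c + 1)) t)).
  - apply filter_imp with (2 := half_line_eventually 1 1 Rlt_0_1).
    intros [x y] [Hx Hy] t [Ht _]; simpl in *.
    assert (Ht0 : 0 < t) by (apply (pos_of_Rmin_le x y); lra).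
    rewrite (is_derive_unique _ _ _ (is_derive_Gamma_integrand c t Ht0)).
    unfold minus, plus, opp, scal; simpl; unfold mult; simpl. ring.
  - exact (is_RInt_gen_minus _ _ _ _ (is_RInt_gen_scal _ (c + 1) _ Hv)
             (is_RInt_gen_Derive_Gamma_integrand c Hc)).
Qed.

Lemma ex_RInt_gen_Gamma_integrand c : 0 <= c ->
  ex_RInt_gen (Gamma_integrand c) (at_right 0) (Rbar_locally p_infty).
Proof.
  intros Hc. destruct (Gamma_integrand_le_inv_sqr c) as [B [_ Htail]].
  refine (ex_RInt_gen_half_line _ 1 B _ _ _ Htail).
  - apply continuous_Gamma_integrand.
  - intros t _. apply Rlt_le, Gamma_integrand_gt0.
  - intros t Ht. now apply Gamma_integrand_le_1.
Qed.

Lemma Gamma_eq_RInt_gen x v :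
  is_RInt_gen (Gamma_integrand (x - 1)) (at_right 0) (Rbar_locally p_infty) v -> Gamma x = v.
Proof. apply (is_RInt_gen_unique (V := R_CompleteNormedModule)). Qed.

Lemma Gamma_succ x : 1 <= x -> Gamma (x + 1) = x * Gamma x.
Proof.
  intros Hx. destruct (ex_RInt_gen_Gamma_integrand (x - 1)) as [v Hv]; [lra|].
  rewrite (Gamma_eq_RInt_gen x v Hv). apply Gamma_eq_RInt_gen.
  replace (x + 1 - 1) with (x - 1 + 1) by ring. replace (x * v) with ((x - 1 + 1) * v) by ring.
  apply is_RInt_gen_Gamma_integrand_succ; [lra | exact Hv].
Qed.

Lemma Gamma_gt0 x : 1 <= x -> 0 < Gamma x.
Proof.
  intros Hx. destruct (ex_RInt_gen_Gamma_integrand (x - 1)) as [v Hv]; [lra|].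
  rewrite (Gamma_eq_RInt_gen x v Hv).
  apply (is_RInt_gen_half_line_gt0 (Gamma_integrand (x - 1))); [| | exact Hv].
  - apply continuous_Gamma_integrand.
  - intros t _. apply Gamma_integrand_gt0.
Qed.

Lemma Gamma_add2_div x : 1 <= x -> Gamma (x + 2) / Gamma x = x * (x + 1).
Proof.
  intros Hx. pose proof (Gamma_gt0 x Hx).
  replace (x + 2) with (x + 1 + 1) by ring.
  rewrite !Gamma_succ by lra. field. lra.
Qed.

Lemma poch_S b k : poch b (S k) = poch b k * (b + INR k).
Proof. reflexivity. Qed.

Lemma poch_gt0 b k : 0 < b -> 0 < poch b k.
Proof.
  intros Hb. induction k as [|k IH]; [simpl; lra|].
  rewrite poch_S. pose proof (pos_INR k). apply Rmult_lt_0_compat; lra.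
Qed.

Lemma poch_1 k : poch 1 k = INR (fact k).
Proof.
  induction k as [|k IH]; [reflexivity|].
  rewrite poch_S, IH, fact_simpl, mult_INR, S_INR. ring.
Qed.

Lemma poch_succ_l b k : poch b (S k) = b * poch (b + 1) k.
Proof.
  induction k as [|k IH]; [simpl; ring|].
  rewrite (poch_S b (S k)), IH, poch_S, S_INR. ring.
Qed.

Lemma poch_add2 b k : poch b k * ((b + INR k) * (b + INR k + 1)) = b * (b + 1) * poch (b + 2) k.
Proof.
  transitivity (poch b (S (S k))); [rewrite !poch_S, S_INR; ring|].
  rewrite poch_succ_l, poch_succ_l. replace (b + 1 + 1) with (b + 2) by ring. ring.
Qed.

Lemma fact_mul_poch m k : INR (fact m) * poch (INR m + 1) k = INR (fact (m + k)).
Proof.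
  induction k as [|k IH]; [rewrite Nat.add_0_r; simpl; ring|].
  rewrite poch_S, <- Rmult_assoc, IH, Nat.add_succ_r, fact_simpl, mult_INR, S_INR, plus_INR.
  ring.
Qed.

Lemma is_series_exp z : is_series (fun k => z ^ k / INR (fact k)) (exp z).
Proof.
  eapply is_series_ext; [|exact (is_exp_Reals z)].
  intros k. simpl. rewrite pow_n_pow. reflexivity.
Qed.

Lemma is_series_exp_tail z l :
  is_series (fun k => z ^ (S l + k) / INR (fact (S l + k)))
    (exp z - sum_f_R0 (fun j => z ^ j / INR (fact j)) l).
Proof.
  apply (is_series_incr_n (fun k => z ^ k / INR (fact k)) (S l)); [lia|].
  rewrite sum_n_Reals. simpl Nat.pred.
  replace (plus _ _) with (exp z) by (unfold plus; simpl; ring).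
  apply is_series_exp.
Qed.

Lemma is_series_telescoping (u : nat -> R) :
  is_lim_seq u 0 -> is_series (fun k => u k - u (S k)) (u O).
Proof.
  intros Hu.
  assert (Hpartial : forall n, sum_n (fun k => u k - u (S k)) n = u O - u (S n)).
  { induction n as [|n IH]; [now rewrite sum_O|].
    rewrite sum_Sn, IH. unfold plus; simpl. ring. }
  change (is_lim_seq (sum_n (fun k => u k - u (S k))) (u O)).
  apply is_lim_seq_ext with (fun n => u O - u (S n)).
  { intros n. now rewrite Hpartial. }
  replace (Finite (u O)) with (Rbar_minus (u O) 0) by (simpl; f_equal; ring).
  apply is_lim_seq_minus'; [apply is_lim_seq_const | now apply is_lim_seq_incr_1 in Hu].
Qed.

Definition pfrac_term (z : R) (m : nat) : R := z ^ m / (INR (fact m) * (INR m - z) * (INR m + 1 - z)).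

Definition telescoping_seq (z : R) (m : nat) : R := z ^ m / (INR (fact m) * (INR m + 1 - z)).

Lemma is_lim_seq_telescoping_seq z : 0 < z < 1 -> is_lim_seq (telescoping_seq z) 0.
Proof.
  intros Hz.
  apply is_lim_seq_le_le with (fun _ => 0) (fun m => z ^ m * / (1 - z)).
  - intros m. unfold telescoping_seq.
    assert (Hfact : 1 <= INR (fact m)) by apply (le_INR 1), lt_O_fact.
    pose proof (pos_INR m). pose proof (pow_lt z m ltac:(lra)).
    split; [apply Rlt_le, Rdiv_lt_0_compat; nra|].
    apply Rmult_le_compat_l; [lra|]. apply Rinv_le_contravar; nra.
  - apply is_lim_seq_const.
  - replace (Finite 0) with (Rbar_mult 0 (/ (1 - z))) by (simpl; f_equal; ring).
    apply is_lim_seq_scal_r, is_lim_seq_geom. rewrite Rabs_right; lra.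
Qed.

Lemma telescoping_seq_diff z j : 0 < z < 1 ->
  telescoping_seq z j - telescoping_seq z (S j)
  = pfrac_term z (S j) + / z * (z ^ S j / INR (fact (S j))).
Proof.
  intros Hz. unfold telescoping_seq, pfrac_term.
  rewrite fact_simpl, mult_INR, S_INR. simpl pow.
  pose proof (INR_fact_lt_0 j). pose proof (pos_INR j).
  field. repeat split; lra.
Qed.

Lemma is_series_exp_tail_pfrac z l : 0 < z < 1 ->
  is_series
    (fun k => pfrac_term z (S l + k))
    (telescoping_seq z l - / z * (exp z - sum_f_R0 (fun j => z ^ j / INR (fact j)) l)).
Proof.
  intros Hz.
  assert (Htel := is_series_telescoping (fun k => telescoping_seq z (k + l))
                    (proj1 (is_lim_seq_incr_n _ l 0) (is_lim_seq_telescoping_seq z Hz))).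
  assert (Hexp := is_series_scal_l (/ z) _ _ (is_series_exp_tail z l)).
  eapply is_series_ext; [|exact (is_series_minus _ _ _ _ Htel Hexp)].
  intros k. cbv beta.
  replace (S k + l)%nat with (S (k + l)) by lia. replace (S l + k)%nat with (S (k + l)) by lia.
  rewrite telescoping_seq_diff by exact Hz.
  unfold plus, opp, scal; cbn -[pow fact INR]; unfold mult; cbn -[pow fact INR]. ring.
Qed.

Lemma hyp2F2_term_eq l k z : 0 < z < 1 ->
  let a := INR l - z in
  poch (a + 1) k * poch 1 k / (poch (INR l + 2) k * poch (a + 3) k) * z ^ k / INR (fact k)
  = (a + 1) * (a + 2) * INR (fact (S l)) / z ^ S l
    * (z ^ (S l + k) / (INR (fact (S l + k)) * (INR (S l + k) - z) * (INR (S l + k) + 1 - z))).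
Proof.
  intros Hz a. unfold pfrac_term. pose proof (pos_INR l). pose proof (pos_INR k).
  assert (Hshift := poch_add2 (a + 1) k).
  replace (a + 1 + 1) with (a + 2) in Hshift by ring.
  replace (a + 1 + 2) with (a + 3) in Hshift by ring.
  assert (Hfact := fact_mul_poch (S l) k).
  rewrite S_INR in Hfact. replace (INR l + 1 + 1) with (INR l + 2) in Hfact by ring.
  rewrite poch_1, <- Hfact, plus_INR, S_INR, pow_add.
  replace (poch (a + 1) k)
    with ((a + 1) * (a + 2) * poch (a + 3) k / ((a + 1 + INR k) * (a + 1 + INR k + 1)))
    by (rewrite <- Hshift; field; unfold a; lra).
  pose proof (poch_gt0 (a + 3) k ltac:(unfold a; lra)).
  pose proof (poch_gt0 (INR l + 2) k ltac:(lra)).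
  pose proof (INR_fact_lt_0 k). pose proof (INR_fact_lt_0 (S l)).
  pose proof (pow_lt z (S l) ltac:(lra)). pose proof (pow_lt z k ltac:(lra)).
  unfold a in *. field. repeat split; lra.
Qed.

Lemma hyp2F2_eq_telescoping l z : 0 < z < 1 ->
  let a := INR l - z in
  hyp2F2 (a + 1) 1 (INR l + 2) (a + 3) z
  = (a + 1) * (a + 2) * INR (fact (S l)) / z ^ S l
    * (telescoping_seq z l - / z * (exp z - sum_f_R0 (fun j => z ^ j / INR (fact j)) l)).
Proof.
  intros Hz a. unfold hyp2F2. apply is_series_unique.
  eapply is_series_ext; [intros k; symmetry; apply hyp2F2_term_eq, Hz|].
  exact (is_series_scal_l (K := R_AbsRing) _ _ _ (is_series_exp_tail_pfrac z l Hz)).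
Qed.

Lemma pow_Rdiv x y m : y <> 0 -> (x / y) ^ m = x ^ m / y ^ m.
Proof. intros Hy. unfold Rdiv. now rewrite Rpow_mult_distr, pow_inv. Qed.

Lemma telescoping_seq_ratio l N : (1 <= l)%nat -> INR l < N ->
  telescoping_seq (INR l / N) l
  = INR l ^ (l - 1) / (INR (fact (l - 1)) * N ^ (l - 1))
    * (1 / ((N + 1) * (INR l + 1) - 1 - 2 * INR l)).
Proof.
  intros Hl HlN. destruct l as [|l]; [lia|].
  replace (S l - 1)%nat with l by lia.
  pose proof (pos_INR l). rewrite S_INR in *.
  assert (HN : 0 < N) by lra.
  unfold telescoping_seq. rewrite pow_Rdiv, fact_simpl, mult_INR, S_INR by lra.
  rewrite <- !tech_pow_Rmult.
  pose proof (pow_lt (INR l + 1) l ltac:(lra)). pose proof (pow_lt N l HN).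
  pose proof (INR_fact_lt_0 l).
  assert (HD : (N + 1) * (INR l + 1 + 1) - 1 - 2 * (INR l + 1) <> 0) by nra.
  field. repeat split; lra.
Qed.

Theorem lemma4p2 (l n : nat) (hl : (1 <= l)%nat) (hln : (l < n)%nat) :
  let L := INR l in
  let N := INR n in
  let a := (N - 1) / N * L in
  hyp2F2 (a + 1) 1 (L + 2) (a + 3) (L / N)
  = INR (fact (l + 1)) * (N ^ (l + 1) / L ^ (l + 1))
    * (Gamma (a + 3) / Gamma (a + 1))
    * ( N / L * (sum_f_R0 (fun k => L ^ k / (INR (fact k) * N ^ k)) l - exp (L / N))
        + L ^ (l - 1) / (INR (fact (l - 1)) * N ^ (l - 1))
          * (1 / ((N + 1) * (L + 1) - 1 - 2 * L)) ).
Proof.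
  intros L N a.
  assert (HL : 1 <= L) by now apply (le_INR 1).
  assert (HLN : L < N) by now apply lt_INR.
  set (z := L / N).
  assert (Hz : 0 < z < 1).
  { unfold z. split; [apply Rdiv_lt_0_compat; lra|].
    replace 1 with (N / N) by (field; lra).
    apply Rmult_lt_compat_r; [apply Rinv_0_lt_compat |]; lra. }
  assert (Ha : a = L - z) by (unfold a, z; field; lra).
  assert (Hhyp := hyp2F2_eq_telescoping l z Hz). cbv zeta in Hhyp. change (INR l) with L in Hhyp.
  rewrite <- Ha in Hhyp. rewrite Hhyp.
  replace (a + 3) with (a + 1 + 2) by ring. rewrite Gamma_add2_div by lra.
  replace (sum_f_R0 (fun k => L ^ k / (INR (fact k) * N ^ k)) l)
    with (sum_f_R0 (fun j => z ^ j / INR (fact j)) l).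
  2:{ apply sum_eq. intros j _. unfold z. rewrite pow_Rdiv by lra.
      pose proof (INR_fact_lt_0 j). pose proof (pow_lt N j ltac:(lra)). field. lra. }
  pose proof (telescoping_seq_ratio l N hl HLN) as Hu. change (INR l) with L in Hu.
  rewrite <- Hu, Nat.add_1_r. unfold z. rewrite pow_Rdiv by lra.
  pose proof (pow_lt L (S l) ltac:(lra)). pose proof (pow_lt N (S l) ltac:(lra)).
  field. lra.
Qed.
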